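(* Let $\varphi$ be a bounded, increasing, submodular setfunction on a sigma-algebra $(J,\mathcal{B})$, continuous from above, with $\varphi(\emptyset)=0$. Let $(\mathcal{P}_n\colon n\in\mathbb{N})$ be a refining sequence of partitions of $J$, each into finitely many sets of $\mathcal{B}$, such that $\bigcup_n\mathcal{P}_n$ generates $\mathcal{B}$. Then $\varphi/\mathcal{P}_n\rightarrowtail\varphi$.
   Context: $\varphi$ is increasing if $X\subseteq Y$ implies $\varphi(X)\le\varphi(Y)$, submodular if $\varphi(X)+\varphi(Y)\ge\varphi(X\cap Y)+\varphi(X\cup Y)$, and continuous from above if $\varphi(\bigcap_nX_n)=\lim_n\varphi(X_n)$ for every decreasing sequence $X_1\supseteq X_2\supseteq\dots$ in $\mathcal{B}$. A sequence of partitions is refining if $\mathcal{P}_{n+1}$ refines $\mathcal{P}_n$. For a finite partition $\mathcal{P}$ of $J$ into sets of $\mathcal{B}$, the quotient $\varphi/\mathcal{P}$ is the setfunction on subsets $\mathcal{S}\subseteq\mathcal{P}$ given by $\mathcal{S}\mapsto\varphi(\bigcup\mathcal{S})$. More generally, for a setfunction $\psi$ on a set-algebra $(I,\mathcal{C})$ and a map $F\colon I\to[k]$ with $F^{-1}(i)\in\mathcal{C}$, the quotient $\psi\circ F^{-1}$ is $A\mapsto\psi(F^{-1}(A))$ on $2^{[k]}$, and $Q_k(\psi)\subseteq\mathbb{R}^{2^k}$ is the set of all such quotients. $\psi_n\rightarrowtail\psi$ means that for every $k\in\mathbb{N}$ the Hausdorff distance in Euclidean $\mathbb{R}^{2^k}$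 between $Q_k(\psi_n)$ and $Q_k(\psi)$ tends to $0$. *)

From HB Require Import structures.
From mathcomp Require Import all_boot all_order all_algebra.
From mathcomp Require Import all_classical all_reals all_analysis.
Set Implicit Arguments. Unset Strict Implicit. Unset Printing Implicit Defensive.
Import Order.TTheory GRing.Theory Num.Theory.
Local Open Scope classical_set_scope.
Local Open Scope ring_scope.

Section Defs.
Variable R : realType.

(* Vectors in R^{2^k}: coordinates indexed by the subsets of [k] = 'I_k. *)
Definition vec2k (k : nat) := {ffun {set 'I_k} -> R}.

Definition eucl_dist (k : nat) (v w : vec2k k) : R :=
  Num.sqrt (\sum_(A : {set 'I_k}) (v A - w A) ^+ 2).

(* Directed Hausdorff deviation sup_{x in X} inf_{y in Y} d(x,y), in \bar R;
   the extra 0 only fixes the convention for X empty (distances are >= 0). *)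
Definition hdev (k : nat) (X Y : set (vec2k k)) : \bar R :=
  ereal_sup ([set 0%E] `|`
    [set ereal_inf [set (eucl_dist x y)%:E | y in Y] | x in X]).

Definition hausdorff (k : nat) (X Y : set (vec2k k)) : \bar R :=
  maxe (hdev X Y) (hdev Y X).

Definition Qk (I : Type) (C : set (set I)) (psi : set I -> R) (k : nat)
  : set (vec2k k) :=
  [set v | exists F : I -> 'I_k,
     (forall i : 'I_k, C (F @^-1` [set i])) /\
     (forall A : {set 'I_k}, v A = psi [set x | F x \in A])].

Definition quot_part (J : Type) (phi : set J -> R) (m : nat)
  (P : 'I_m -> set J) : set 'I_m -> R :=
  fun S => phi (\bigcup_(i in S) P i).

End Defs.

Arguments Qk {R I} C psi k _.
Arguments quot_part {R J} phi {m} P _.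
Arguments hausdorff {R k} X Y.

From HB Require Import structures.
From mathcomp Require Import all_boot all_order all_algebra.
From mathcomp Require Import all_classical all_reals all_analysis.
From mathcomp Require Import lra.
Set Implicit Arguments. Unset Strict Implicit. Unset Printing Implicit Defensive.
Import Order.TTheory GRing.Theory Num.Theory numFieldNormedType.Exports.
Local Open Scope classical_set_scope.
Local Open Scope ring_scope.

(* Submodularity and monotonicity give [|phi X - phi Y| <= phi (X `+` Y)], so it
   suffices to approximate sets of B by unions of blocks in the pseudo-distance
   [phi (X `+` Y)].  The approximable sets form a sigma-algebra (continuity from
   above handles countable unions) containing the blocks, hence all of B.
   Approximating the fibres of a measurable labelling [G : J -> 'I_k] by unions
   of blocks gives a labelling of the blocks whose quotient is close to that of
   [G].  As Q_k(phi) is bounded, finitely many labellings form a net of it, so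
   the approximation level can be chosen uniformly in [G]; the other inclusion
   Q_k(phi/P_n) in Q_k(phi) is exact. *)

Section sigma_algebra_closure.
Context {T : Type} {B : set (set T)}.
Hypothesis salgB : sigma_algebra setT B.

Lemma sigma_algebra_setC_closed : setC_closed B.
Proof. by case: salgB => _ BD _ X /BD; rewrite setTD. Qed.

Lemma sigma_algebra_setI_closed : setI_closed B.
Proof. by have [] := (sigma_algebraP (fun X _ => @subsetT _ X)).1 salgB. Qed.

Lemma sigma_algebra_setU_closed : setU_closed B.
Proof.
move=> X Y BX BY; rewrite -[X `|` Y]setCK setCU.
by apply/sigma_algebra_setC_closed/sigma_algebra_setI_closed;
  apply: sigma_algebra_setC_closed.
Qed.

Lemma sigma_algebra_setY_closed : setY_closed B.
Proof.
move=> X Y BX BY; rewrite setY_def !setDE.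
by apply: sigma_algebra_setU_closed; apply: sigma_algebra_setI_closed => //;
  apply: sigma_algebra_setC_closed.
Qed.

Lemma sigma_algebra_preimage_finType (K : finType) (f : T -> K) :
  (forall i, B (f @^-1` [set i])) -> forall S, B (f @^-1` S).
Proof.
move=> Bf S; rewrite -[S]image_id -bigcup_imset1 preimage_bigcup.
have [B0 _ _] := salgB.
have BU := (fin_bigcup_closedP B).1 (conj B0 sigma_algebra_setU_closed).
by apply: BU => //; exact: finite_finset.
Qed.

End sigma_algebra_closure.

Section submodular.
Context {R : realType} {T : Type} (B : set (set T)) (phi : set T -> R).
Hypotheses (salgB : sigma_algebra setT B)
  (phi_mono : forall X Y, B X -> B Y -> X `<=` Y -> phi X <= phi Y)
  (phi_submod : forall X Y, B X -> B Y ->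
     phi (X `&` Y) + phi (X `|` Y) <= phi X + phi Y)
  (phi0 : phi set0 = 0).

Let B0 : B set0. Proof. by case: salgB. Qed.
Let BsetU := sigma_algebra_setU_closed salgB.
Let BsetY := sigma_algebra_setY_closed salgB.
Let BsetC := sigma_algebra_setC_closed salgB.

Lemma phi_ge0 X : B X -> 0 <= phi X.
Proof. by move=> BX; rewrite -phi0; apply: phi_mono. Qed.

Lemma phi_setU_le X Y : B X -> B Y -> phi (X `|` Y) <= phi X + phi Y.
Proof.
move=> BX BY; have := phi_submod BX BY.
have := phi_ge0 (sigma_algebra_setI_closed salgB BX BY); lra.
Qed.

Lemma phi_bigsetU_le (I : finType) (F : I -> set T) : (forall i, B (F i)) ->
  phi (\big[setU/set0]_i F i) <= \sum_i phi (F i).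
Proof.
move=> BF; suff [] : B (\big[setU/set0]_i F i) /\
    phi (\big[setU/set0]_i F i) <= \sum_i phi (F i) by [].
apply: (big_ind2 (fun X r => B X /\ phi X <= r)) => [|X r Y s [BX Xr] [BY Ys]|i _].
- by rewrite phi0.
- by split; [exact: BsetU | exact: le_trans (phi_setU_le BX BY) (lerD Xr Ys)].
- by [].
Qed.

Lemma phi_setY_triangle X Y Z : B X -> B Y -> B Z ->
  phi (X `+` Z) <= phi (X `+` Y) + phi (Y `+` Z).
Proof.
move=> BX BY BZ; apply: le_trans _ (phi_setU_le (BsetY BX BY) (BsetY BY BZ)).
apply: phi_mono; [exact: BsetY | apply: BsetU; exact: BsetY |].
by move=> x /=; have [] := pselect (Y x); tauto.
Qed.

Lemma phi_dist_le X Y : B X -> B Y -> `|phi X - phi Y| <= phi (X `+` Y).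
Proof.
have le X' Y' : B X' -> B Y' -> phi X' <= phi Y' + phi (X' `+` Y').
  move=> BX' BY'; apply: le_trans _ (phi_setU_le BY' (BsetY BX' BY')).
  apply: phi_mono => //; first by apply: BsetU => //; exact: BsetY.
  by move=> x /= X'x; have [] := pselect (Y' x); tauto.
move=> BX BY; have := le _ _ BX BY; have := le _ _ BY BX.
rewrite setYC ler_norml; lra.
Qed.

Definition phi_closure (U : set (set T)) : set (set T) :=
  [set X | B X /\ forall e, 0 < e -> exists2 Y, U Y & phi (X `+` Y) <= e].

Section phi_closure.
Variable U : set (set T).
Hypotheses (U_sub : U `<=` B) (U0 : U set0) (UC : setC_closed U)
  (UU : setU_closed U).

Lemma sub_phi_closure : U `<=` phi_closure U.
Proof.
move=> X UX; split=> [|e e0]; first exact: U_sub.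
by exists X => //; rewrite setYK phi0 ltW.
Qed.

Lemma phi_closureC : setC_closed (phi_closure U).
Proof.
move=> X [BX aX]; split=> [|e /aX[Y UY XYe]]; first exact: BsetC.
exists (~` Y); first exact: UC.
suff -> : ~` X `+` ~` Y = X `+` Y by [].
apply/seteqP; split=> x /=;
  by have [] := pselect (X x); have [] := pselect (Y x); tauto.
Qed.

Lemma phi_closureU : setU_closed (phi_closure U).
Proof.
move=> X1 X2 [BX1 aX1] [BX2 aX2]; split=> [|e e0]; first exact: BsetU.
have e2 : 0 < e / 2 by rewrite divr_gt0.
have [Y1 UY1 le1] := aX1 _ e2; have [Y2 UY2 le2] := aX2 _ e2.
exists (Y1 `|` Y2); first exact: UU.
have [BY1 BY2] := (U_sub UY1, U_sub UY2).
apply: le_trans (_ : phi ((X1 `+` Y1) `|` (X2 `+` Y2)) <= _).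
  apply: phi_mono; [apply: BsetY; exact: BsetU | apply: BsetU; exact: BsetY |].
  by move=> x /=; tauto.
apply: le_trans (phi_setU_le (BsetY BX1 BY1) (BsetY BX2 BY2)) _.
by rewrite [e]splitr; exact: lerD.
Qed.

Lemma phi_closure_closed X : B X ->
    (forall e, 0 < e -> exists2 Z, phi_closure U Z & phi (X `+` Z) <= e) ->
  phi_closure U X.
Proof.
move=> BX aX; split=> // e e0; have e2 : 0 < e / 2 by rewrite divr_gt0.
have [Z [BZ aZ] XZ] := aX _ e2; have [Y UY ZY] := aZ _ e2.
exists Y => //; apply: le_trans (phi_setY_triangle BX BZ (U_sub UY)) _.
by rewrite [e]splitr; exact: lerD.
Qed.

Hypothesis phi_cont : forall X : (set T)^nat, (forall n, B (X n)) ->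
  (forall n, X n.+1 `<=` X n) -> phi (X n) @[n --> \oo] --> phi (\bigcap_n X n).

Lemma phi_closure_bigcup (A : (set T)^nat) :
  (forall n, phi_closure U (A n)) -> phi_closure U (\bigcup_n A n).
Proof.
move=> aA; have BA n : B (A n) by case: (aA n).
pose Y n := \big[setU/set0]_(j < n) A j.
have YS n : Y n.+1 = Y n `|` A n by rewrite /Y big_ord_recr.
have aY n : phi_closure U (Y n).
  elim: n => [|n IH]; first by rewrite /Y big_ord0; exact: sub_phi_closure.
  by rewrite YS; exact: phi_closureU.
have BY n : B (Y n) by case: (aY n).
set X := \bigcup_n A n.
have BX : B X by case: salgB => _ _; apply.
have YX n : Y n `<=` X by exact: bigsetU_bigcup.
have BXY n : B (X `\` Y n).
  by rewrite setDE; apply: sigma_algebra_setI_closed => //; exact: BsetC.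
have XYdec n : X `\` Y n.+1 `<=` X `\` Y n.
  by apply: setDS; rewrite YS; exact: subsetUl.
have XYcap : \bigcap_n (X `\` Y n) = set0.
  apply/seteqP; split=> // x XYx; have [[j _ Ajx] _] := XYx 0%N I.
  by have [_] := XYx j.+1 I; apply; exact: (bigsetU_sup (ltnSn j)).
have := phi_cont BXY XYdec; rewrite XYcap phi0 => /cvgr_dist_le cv.
apply: phi_closure_closed => // e /cv[N _ /(_ N (leqnn N))].
rewrite sub0r normrN => le.
have YNX : Y N `\` X = set0 by rewrite setD_eq0.
exists (Y N) => //; rewrite setY_def YNX setU0.
exact: le_trans (ler_norm _) le.
Qed.

Lemma sigma_algebra_phi_closure : sigma_algebra setT (phi_closure U).
Proof.
split=> [|X /phi_closureC|]; first exact: sub_phi_closure.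
- by rewrite setTD.
- exact: phi_closure_bigcup.
Qed.

End phi_closure.

End submodular.

Lemma truncn_eq_dist_lt (R : archiRealFieldType) (a b : R) : 0 <= a -> 0 <= b ->
  Num.truncn a = Num.truncn b -> `|a - b| < 1.
Proof.
move=> a0 b0 ab; have /andP[a1 a2] := truncn_itv a0.
have /andP[b1 b2] := truncn_itv b0.
rewrite ab -natr1 in a1 a2; rewrite -natr1 in b2.
rewrite ltr_norml; apply/andP; split; lra.
Qed.

Lemma finite_partition_small_diameter (R : archiRealFieldType) (I : Type)
    (K : finType) (v : I -> K -> R) (M d : R) :
  0 < d -> (forall i x, 0 <= v i x <= M) ->
  exists (C : finType) (cell : I -> C),
    forall i j, cell i = cell j -> forall x, `|v i x - v j x| <= d.
Proof.
move=> d0 vM; pose L := (Num.truncn (M / d)).+1.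
have vL i x : (Num.truncn (v i x / d) < L)%N.
  have /andP[vi0 viM] := vM i x.
  by rewrite ltnS le_truncn // ler_pM2r ?invr_gt0.
have vd0 i x : 0 <= v i x / d.
  by have /andP[vi0 _] := vM i x; rewrite divr_ge0 // ltW.
exists {ffun K -> 'I_L}, (fun i => [ffun x => inord (Num.truncn (v i x / d))]).
move=> i j /ffunP cij x; have := cij x; rewrite !ffunE => /(congr1 val).
rewrite /= !inordK // => /(truncn_eq_dist_lt (vd0 i x) (vd0 j x)).
by rewrite -mulrBl normrM normfV (gtr0_norm d0) ltr_pdivrMr // mul1r => /ltW.
Qed.

Lemma partition_index (T : Type) (I : eqType) (P : I -> set T) :
    (forall i j, i != j -> P i `&` P j = set0) ->
    \bigcup_(i in setT) P i = setT ->
  {f : T -> I | forall i, P i = f @^-1` [set i]}.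
Proof.
move=> Pdisj Pcov; have cover x : exists i, P i x.
  by have : setT x by []; rewrite -Pcov => -[i _ Pix]; exists i.
exists (fun x => sval (cid (cover x))) => i.
apply/seteqP; split=> x /=; last first.
  by move=> <-; exact: (svalP (cid (cover x))).
move=> Pix; have Pfx := svalP (cid (cover x)); apply: contrapT => /eqP/Pdisj.
by move=> /seteqP[/(_ x (conj Pfx Pix))].
Qed.

Lemma partition_index_refine (T : Type) (I J : eqType) (P : I -> set T)
    (Q : J -> set T) (f : T -> I) (g : T -> J) :
    (forall i, P i = f @^-1` [set i]) -> (forall j, Q j = g @^-1` [set j]) ->
    (forall j, exists i, Q j `<=` P i) ->
  exists h : J -> I, forall x, f x = h (g x).
Proof.
move=> Pf Qg /choice[h QP]; exists h => x.
have Qgx : Q (g x) x by rewrite Qg.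
by have := QP _ _ Qgx; rewrite Pf.
Qed.

Lemma quot_partE (R : realType) (T : Type) (phi : set T -> R) m
    (P : 'I_m -> set T) (f : T -> 'I_m) :
  (forall i, P i = f @^-1` [set i]) ->
  forall S, quot_part phi P S = phi (f @^-1` S).
Proof.
move=> Pf S; congr phi; apply/seteqP; split=> [x [i Si]|x Sx].
  by rewrite Pf /= => ->.
by exists (f x); rewrite ?Pf.
Qed.

Section hausdorff_bounds.
Context {R : realType} (k : nat).
Implicit Types (X Y : set (vec2k R k)) (v w : vec2k R k).

Lemma hdev_ge0 X Y : (0 <= hdev X Y)%E.
Proof. by apply: ereal_sup_ubound; left. Qed.

Lemma hdev_le X Y (e : R) : 0 <= e ->
  (forall v, X v -> exists2 w, Y w & eucl_dist v w <= e) -> (hdev X Y <= e%:E)%E.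
Proof.
move=> e0 XY; apply: ge_ereal_sup => _ [->|[v Xv <-]]; first by rewrite lee_fin.
have [w Yw vw] := XY v Xv; apply: ge_ereal_inf; exists (eucl_dist v w)%:E.
  by exists w.
by rewrite lee_fin.
Qed.

Lemma eucl_dist_le v w (e : R) : (forall A, `|v A - w A| <= e) ->
  eucl_dist v w <= #|{set 'I_k}|%:R * e.
Proof.
move=> vw; have e0 : 0 <= e := le_trans (normr_ge0 _) (vw finset.set0).
pose c : R := #|{set 'I_k}|%:R.
have c1 : 1 <= c by rewrite ler1n; apply/card_gt0P; exists finset.set0.
have -> : c * e = Num.sqrt ((c * e) ^+ 2).
  by rewrite sqrtr_sqr ger0_norm // mulr_ge0 // (le_trans ler01).
rewrite ler_sqrt ?sqr_ge0 //.
apply: le_trans (_ : \sum_(A : {set 'I_k}) e ^+ 2 <= _).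
  by apply: ler_sum => A _; have := vw A; rewrite ler_norml => /andP[]; nra.
rewrite sumr_const -[_ *+ _]mulr_natl -/c exprMn; nra.
Qed.

Lemma hdev_le_card X Y (e : R) : 0 <= e ->
    (forall v, X v -> exists2 w, Y w & forall A, `|v A - w A| <= e) ->
  (hdev X Y <= (#|{set 'I_k}|%:R * e)%:E)%E.
Proof.
move=> e0 XY; apply: hdev_le => [|v /XY[w Yw vw]]; first exact: mulr_ge0.
by exists w => //; exact: eucl_dist_le.
Qed.

End hausdorff_bounds.

Lemma nneseq_cvge0 (R : realType) (u : nat -> \bar R) :
    (forall e : R, 0 < e -> exists N, forall n, (N <= n)%N ->
      (0 <= u n <= e%:E)%E) ->
  u @ \oo --> 0%E.
Proof.
move=> ule; apply/fine_cvgP; split.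
  have [N uN] := ule 1 ltr01; exists N => // n /uN /andP[u0 u1].
  by rewrite ge0_fin_numE // (le_lt_trans u1) ?ltey.
apply/cvgrPdist_le => e e0; have [N uN] := ule e e0; exists N => // n /uN /=.
case: (u n) => [r||] //=; rewrite ?lee_fin ?leey ?leNye //.
by move=> /andP[r0 re]; rewrite sub0r normrN ger0_norm.
Qed.

Section partition_approximation.
Context {R : realType} {T : Type} (B : set (set T)) (phi : set T -> R) (M : R).
Context (m : nat -> nat) (blk : forall n, T -> 'I_(m n))
  (pt : forall n, 'I_(m n) -> T).
Hypotheses (salgB : sigma_algebra setT B)
  (phi_mono : forall X Y, B X -> B Y -> X `<=` Y -> phi X <= phi Y)
  (phi_submod : forall X Y, B X -> B Y ->
     phi (X `&` Y) + phi (X `|` Y) <= phi X + phi Y)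
  (phi_cont : forall X : (set T)^nat, (forall n, B (X n)) ->
     (forall n, X n.+1 `<=` X n) ->
     phi (X n) @[n --> \oo] --> phi (\bigcap_n X n))
  (phi0 : phi set0 = 0) (phi_le : forall X, B X -> phi X <= M).
Hypotheses (B_blk : forall n i, B (blk n @^-1` [set i]))
  (blk_refine : forall n, exists g : 'I_(m n.+1) -> 'I_(m n),
     forall x, blk n x = g (blk n.+1 x))
  (B_gen : B `<=`
     <<s [set X | exists n (i : 'I_(m n)), X = blk n @^-1` [set i]] >>).

Lemma blk_factor n n' : (n <= n')%N ->
  exists g : 'I_(m n') -> 'I_(m n), forall x, blk n x = g (blk n' x).
Proof.
move=> /subnK <-; elim: (n' - n)%N => [|d [g blk_g]]; first by exists id.
have [g' blk_g'] := blk_refine (d + n).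
by exists (g \o g') => x; rewrite blk_g blk_g'.
Qed.

Lemma preimage_blk_lift n n' (S : set 'I_(m n)) : (n <= n')%N ->
  exists S' : set 'I_(m n'), blk n @^-1` S = blk n' @^-1` S'.
Proof.
move=> /blk_factor[g blk_g]; exists (g @^-1` S).
by apply/seteqP; split=> x /=; rewrite blk_g.
Qed.

Lemma B_preimage_blk n (S : set 'I_(m n)) : B (blk n @^-1` S).
Proof. exact: (sigma_algebra_preimage_finType salgB (@B_blk n)). Qed.

Let block_sets := [set X | exists n (S : set 'I_(m n)), X = blk n @^-1` S].

Let block_sets_sub : block_sets `<=` B.
Proof. by move=> _ [n [S ->]]; exact: B_preimage_blk. Qed.

Let block_sets0 : block_sets set0.
Proof. by exists 0%N, set0; rewrite preimage_set0. Qed.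

Let block_setsC : setC_closed block_sets.
Proof. by move=> _ [n [S ->]]; exists n, (~` S); rewrite preimage_setC. Qed.

Let block_setsU : setU_closed block_sets.
Proof.
move=> _ _ [n1 [S1 ->]] [n2 [S2 ->]].
have [S1' ->] := preimage_blk_lift S1 (leq_maxl n1 n2).
have [S2' ->] := preimage_blk_lift S2 (leq_maxr n1 n2).
by exists (maxn n1 n2), (S1' `|` S2'); rewrite preimage_setU.
Qed.

Lemma approx_by_blocks X : B X ->
  forall e, 0 < e -> exists N, forall n, (N <= n)%N ->
  exists S : set 'I_(m n), phi (X `+` blk n @^-1` S) <= e.
Proof.
move=> BX e e0.
have gen_sub :
    <<s [set X | exists n (i : 'I_(m n)), X = blk n @^-1` [set i]] >> `<=`
    phi_closure B phi block_sets.
  apply: smallest_sub; first exact: sigma_algebra_phi_closure.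
  move=> _ [n [i ->]]; apply: sub_phi_closure => //; exists n, [set i] => //.
have [_ /(_ e e0)[_ [N [S ->]] le]] := gen_sub _ (B_gen BX).
exists N => n Nn; have [S' eqS'] := preimage_blk_lift S Nn.
by exists S'; rewrite -eqS'.
Qed.

Lemma approx_labelling k (G : T -> 'I_k) : (forall i, B (G @^-1` [set i])) ->
  forall e, 0 < e -> exists N, forall n, (N <= n)%N ->
  exists F : 'I_(m n) -> 'I_k, forall A : {set 'I_k},
    `|phi [set x | G x \in A] - phi [set x | F (blk n x) \in A]| <= e.
Proof.
move=> BG e e0; pose e' := e / k.+1%:R.
have e'0 : 0 < e' by rewrite divr_gt0.
have [N HN] := choice (fun j => approx_by_blocks (BG j) e'0).
exists (\max_j N j) => n Nn.
have [S HS] := choice (fun j => HN j n (leq_trans (leq_bigmax j) Nn)).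
pose D := \big[setU/set0]_j (G @^-1` [set j] `+` blk n @^-1` S j).
have BD : B D.
  apply: big_ind => [||j _]; first by case: salgB.
    exact: sigma_algebra_setU_closed.
  exact: sigma_algebra_setY_closed (BG j) (B_preimage_blk _).
have phiD : phi D <= e.
  apply: le_trans (phi_bigsetU_le salgB phi_mono phi_submod phi0 _) _.
    by move=> j; exact: sigma_algebra_setY_closed (BG j) (B_preimage_blk _).
  apply: le_trans (_ : \sum_(j < k) e' <= _); first by apply: ler_sum => j _.
  rewrite sumr_const card_ord -mulr_natr /e' mulrAC ler_pdivrMr ?ltr0Sn //.
  by rewrite ler_pM2l // ler_nat.
(* The default label is only used inside [D]; [pt] merely has to exist, which
   is where the nonemptiness of the blocks enters. *)
pose F b := odflt (G (pt b)) [pick j | `[< S j b >]].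
have FG x : ~ D x -> F (blk n x) = G x.
  move=> nDx; have SG j : S j (blk n x) <-> G x = j.
    split=> [Sj|Gj]; apply: contrapT => nj; apply: nDx;
      rewrite /D (bigD1 j) //=; left; by [right | left].
  rewrite /F; case: pickP => [j /asboolP /SG // | /(_ (G x)) /negbT /asboolPn].
  by have := (SG (G x)).2 erefl.
exists F => A.
have BGA : B [set x | G x \in A] :=
  sigma_algebra_preimage_finType salgB BG [set j | j \in A].
have BFA : B [set x | F (blk n x) \in A] := B_preimage_blk [set b | F b \in A].
apply: le_trans (phi_dist_le salgB phi_mono phi_submod phi0 BGA BFA) _.
apply: le_trans phiD; apply: phi_mono => //.
  exact: sigma_algebra_setY_closed.
by move=> x; have [//|/FG FGx] := pselect (D x); rewrite /= FGx => -[[]|[]].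
Qed.

Lemma approx_labelling_uniform k e : 0 < e -> exists N, forall n, (N <= n)%N ->
  forall G : T -> 'I_k, (forall i, B (G @^-1` [set i])) ->
  exists F : 'I_(m n) -> 'I_k, forall A : {set 'I_k},
    `|phi [set x | G x \in A] - phi [set x | F (blk n x) \in A]| <= e.
Proof.
move=> e0; have e2 : 0 < e / 2 by rewrite divr_gt0.
pose I := {G : T -> 'I_k | forall i, B (G @^-1` [set i])}.
pose v (G : I) (A : {set 'I_k}) := phi [set x | sval G x \in A].
have BI (G : I) (A : {set 'I_k}) : B [set x | sval G x \in A] :=
  sigma_algebra_preimage_finType salgB (svalP G) [set j | j \in A].
have vM G A : 0 <= v G A <= M.
  by rewrite (phi_ge0 salgB phi_mono phi0 (BI G A)) phi_le.
have [C [cell cellP]] := finite_partition_small_diameter e2 vM.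
have /choice[N HN] : forall c, exists N, forall n, (N <= n)%N ->
    forall G, cell G = c ->
    exists F : 'I_(m n) -> 'I_k, forall A,
      `|v G A - phi [set x | F (blk n x) \in A]| <= e.
  move=> c; have [[G0 <-]|none] := pselect (exists G0, cell G0 = c).
    have [N HN] := approx_labelling (svalP G0) e2.
    exists N => n Nn G cG; have [F HF] := HN n Nn; exists F => A.
    rewrite [e]splitr; apply: le_trans (ler_distD (v G0 A) _ _) (lerD _ (HF A)).
    exact: cellP.
  by exists 0%N => n _ G cG; case: none; exists G.
exists (\max_c N c) => n Nn G BG; pose G' : I := exist _ G BG.
exact: (HN (cell G') n (leq_trans (leq_bigmax _) Nn) G').
Qed.

Lemma hausdorff_Qk_blocks_le n k (e : R) : 0 <= e ->
    (forall G : T -> 'I_k, (forall i, B (G @^-1` [set i])) ->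
      exists F : 'I_(m n) -> 'I_k, forall A : {set 'I_k},
        `|phi [set x | G x \in A] - phi [set x | F (blk n x) \in A]| <= e) ->
  (0 <= hausdorff (Qk [set: set 'I_(m n)] (fun S => phi (blk n @^-1` S)) k)
                  (Qk B phi k) <= (#|{set 'I_k}|%:R * e)%:E)%E.
Proof.
move=> e0 approx; rewrite le_max hdev_ge0 ge_max /=.
apply/andP; split; apply: hdev_le_card => //.
- move=> v [F [_ vF]]; exists v => [|A]; last by rewrite subrr normr0.
  exists (F \o blk n); split=> [i|A]; last exact: vF.
  exact: (B_preimage_blk (F @^-1` [set i])).
- move=> w [G [BG wG]]; have [F HF] := approx G BG.
  exists [ffun A : {set 'I_k} => phi [set x | F (blk n x) \in A]] => [|A].
    by exists F; split=> // A; rewrite ffunE.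
  by rewrite wG ffunE.
Qed.

End partition_approximation.

Theorem theorem4p3 (R : realType) (J : Type) (B : set (set J))
  (phi : set J -> R) (m : nat -> nat) (P : forall n : nat, 'I_(m n) -> set J) :
  (* each P n is a partition of J into finitely many nonempty sets of B *)
  (forall n (i : 'I_(m n)), B (P n i)) ->
  (forall n (i : 'I_(m n)), P n i !=set0) ->
  (forall n (i j : 'I_(m n)), i != j -> P n i `&` P n j = set0) ->
  (forall n, \bigcup_(i in [set: 'I_(m n)]) P n i = [set: J]) ->
  (* refining *)
  (forall n (j : 'I_(m n.+1)), exists i : 'I_(m n), P n.+1 j `<=` P n i) ->
  (* the union of the partitions generates the sigma-algebra B *)
  B = <<s [set A | exists n (i : 'I_(m n)), A = P n i] >> ->
  (* phi bounded, increasing, submodular, continuous from above, phi(0) = 0 *)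
  (exists M : R, forall X, B X -> `|phi X| <= M) ->
  (forall X Y, B X -> B Y -> X `<=` Y -> phi X <= phi Y) ->
  (forall X Y, B X -> B Y -> phi X + phi Y >= phi (X `&` Y) + phi (X `|` Y)) ->
  (forall X : nat -> set J, (forall n, B (X n)) ->
     (forall n, X n.+1 `<=` X n) ->
     (fun n => phi (X n)) @ \oo --> phi (\bigcap_n X n)) ->
  phi set0 = 0 ->
  (* conclusion: phi / P_n  >->  phi *)
  forall k : nat,
    (fun n => hausdorff (Qk [set: set 'I_(m n)] (quot_part phi (P n)) k)
                        (Qk B phi k)) @ \oo --> 0%E.
Proof.
move=> BP Pne Pdisj Pcov Pref Bgen [M phiM] mono submod cont phi0 k.
have salgB : sigma_algebra setT B by rewrite Bgen; exact: smallest_sigma_algebra.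
pose blk n := sval (partition_index (@Pdisj n) (Pcov n)).
have Pblk n : forall i, P n i = blk n @^-1` [set i] :=
  svalP (partition_index _ _).
have B_blk n (i : 'I_(m n)) : B (blk n @^-1` [set i]) by rewrite -Pblk.
have blk_refine n := partition_index_refine (Pblk n) (Pblk n.+1) (Pref n).
have B_gen :
    B `<=` <<s [set X | exists n (i : 'I_(m n)), X = blk n @^-1` [set i]] >>.
  rewrite {1}Bgen; apply: sub_sigma_algebra2 => _ [n [i ->]].
  by exists n, i; rewrite Pblk.
have phi_le X : B X -> phi X <= M by move=> /phiM; exact: le_trans (ler_norm _).
pose pt n (i : 'I_(m n)) := sval (cid (Pne n i)).
apply: nneseq_cvge0 => e e0; pose c : R := #|{set 'I_k}|%:R.
have c0 : 0 < c by rewrite ltr0n; apply/card_gt0P; exists finset.set0.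
have [N HN] := approx_labelling_uniform pt salgB mono submod cont phi0 phi_le
  B_blk blk_refine B_gen k (divr_gt0 e0 c0).
exists N => n Nn; rewrite (funext (quot_partE phi (Pblk n))).
have -> : e = c * (e / c) by rewrite mulrC divfK ?gt_eqF.
exact (hausdorff_Qk_blocks_le salgB B_blk (divr_ge0 (ltW e0) (ltW c0)) (HN n Nn)).
Qed.
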